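(* Let $n\ge1$. If $A\subseteq\Omega_n$ has odd cardinality, then $\mu_n(A)\neq0$.
   Context: For $n\ge1$, $\Omega_n$ is the set of strings $\omega=\alpha_0\alpha_1\cdots\alpha_n$ with $\alpha_k\in\{0,1\}$, $\alpha_0=0$. For $\omega=\alpha_0\cdots\alpha_n$, $\omega'=\alpha'_0\cdots\alpha'_n\in\Omega_n$ let $D^n(\omega,\omega')=2^{-n}\prod_{k=1}^n i^{|\alpha_k-\alpha_{k-1}|}\prod_{k=1}^n i^{-|\alpha'_k-\alpha'_{k-1}|}\,\delta_{\alpha_n\alpha'_n}$ ($i=\sqrt{-1}$), and for $A\subseteq\Omega_n$ let $\mu_n(A)=\sum_{\omega,\omega'\in A}D^n(\omega,\omega')$. *)

From mathcomp Require Import all_boot all_order all_algebra all_field.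
Set Implicit Arguments. Unset Strict Implicit. Unset Printing Implicit Defensive.
Import Order.TTheory GRing.Theory Num.Theory.
Local Open Scope ring_scope.

Definition bstring (n : nat) := {ffun 'I_n.+1 -> bool}.

(* k-th letter alpha_k, as a natural number 0/1 (index read modulo bounds via inord). *)
Definition letter (n : nat) (w : bstring n) (k : nat) : nat := nat_of_bool (w (inord k)).

Definition Omega (n : nat) : {set bstring n} := [set w : bstring n | ~~ w ord0].

Definition jump (n : nat) (w : bstring n) (k : nat) : nat :=
  `|(letter w k)%:Z - (letter w k.-1)%:Z|%N.

Definition Dn (n : nat) (w w' : bstring n) : algC :=
  (2 ^- n) * (\prod_(1 <= k < n.+1) 'i ^+ jump w k)
           * (\prod_(1 <= k < n.+1) 'i ^- jump w' k)
           * (letter w n == letter w' n)%:R.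

Definition mu (n : nat) (A : {set bstring n}) : algC :=
  \sum_(w in A) \sum_(w' in A) Dn w w'.

(* Along a string of Omega_n the factors i^{|alpha_k - alpha_{k-1}|} multiply
   to i^J, where J counts the letter changes; since alpha_0 = 0, J is odd
   exactly when alpha_n = 1.  Writing i^J = s * i^{J mod 2} with a sign
   s = (-1)^{J div 2}, the constraint alpha_n = alpha'_n makes the powers of i
   cancel in D^n, so 2^n mu_n(A) = z_0^2 + z_1^2, where z_c sums the signs over
   the strings of A ending in c.  A sum of m signs has the parity of m, and
   one of the two classes of A has odd size, so z_0^2 + z_1^2 > 0. *)
From mathcomp Require Import all_boot all_order all_algebra all_field.
Import Order.TTheory GRing.Theory Num.Theory.
Local Open Scope ring_scope.

Lemma sum_signs_neq0 {T : finType} (P : {pred T}) (e : T -> nat) :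
  odd #|P| -> \sum_(x in P) (-1) ^+ e x != 0 :> int.
Proof.
have sumE : \sum_(x in P) (-1) ^+ e x
    = #|P|%:Z - 2 * (\sum_(x in P) odd (e x))%N%:Z :> int.
  rewrite -sum1_card -!natz !natr_sum mulr_sumr -sumrB.
  by apply: eq_bigr => x _; rewrite -signr_odd; case: (odd _).
rewrite sumE subr_eq0 -PoszM; apply: contraL => /eqP[->].
by rewrite mul2n odd_double.
Qed.

Lemma sum_sqr_classes (R : comPzRingType) (T : finType) (A : {pred T})
    (f : T -> R) (b : T -> bool) :
  \sum_(x in A) \sum_(y in A) f x * f y * (b x == b y)%:R
    = (\sum_(x in A | b x) f x) ^+ 2 + (\sum_(x in A | ~~ b x) f x) ^+ 2.
Proof.
rewrite !big_mkcondr /= !expr2 !mulr_suml -big_split /=.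
apply: eq_bigr => x _; rewrite !mulr_sumr -big_split /=.
apply: eq_bigr => y _.
by case: (b x); case: (b y); rewrite /= ?mulr1 ?mulr0 ?mul0r ?add0r ?addr0.
Qed.

Lemma expCi_half (C : numClosedFieldType) (m : nat) :
  'i ^+ m = ((-1) ^+ m./2 : int)%:~R * 'i ^+ odd m :> C.
Proof.
rewrite -{1}(odd_double_half m) exprD -muln2 mulnC exprM sqrCi mulrC.
by rewrite rmorphXn /= rmorphN1.
Qed.

Section JumpsOmega.
Variable n : nat.
Implicit Types w : bstring n.

Definition jumps w : nat := \sum_(1 <= k < n.+1) jump w k.

Definition jumps_sign w : int := (-1) ^+ (jumps w)./2.

Lemma odd_jump w k : odd (jump w k) = w (inord k) (+) w (inord k.-1).
Proof. by rewrite /jump /letter; case: (w _); case: (w _). Qed.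

Lemma odd_jumps_prefix w m :
  odd (\sum_(1 <= k < m.+1) jump w k) = w (inord m) (+) w (inord 0).
Proof.
elim: m => [|m IHm]; first by rewrite big_geq // addbb.
rewrite big_nat_recr //= oddD IHm odd_jump /=.
by case: (w (inord m)); case: (w (inord m.+1)); case: (w (inord 0)).
Qed.

Lemma Omega_inord0 w : w \in Omega n -> w (inord 0) = false.
Proof.
rewrite inE => /negbTE w0.
by have -> : inord 0 = ord0 :> 'I_n.+1 by apply: val_inj; rewrite /= inordK.
Qed.

Lemma odd_jumps_Omega w : w \in Omega n -> odd (jumps w) = w (inord n).
Proof. by move=> /Omega_inord0 w0; rewrite /jumps odd_jumps_prefix w0 addbF. Qed.

Lemma prod_i_jump w :
  \prod_(1 <= k < n.+1) 'i ^+ jump w k = (jumps_sign w)%:~R * 'i ^+ odd (jumps w) :> algC.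
Proof. by rewrite prodrXr expCi_half. Qed.

Lemma Dn_Omega w w' : w \in Omega n -> w' \in Omega n ->
  Dn w w' = 2 ^- n * (jumps_sign w * jumps_sign w'
                      * (odd (jumps w) == odd (jumps w'))%:R)%:~R.
Proof.
move=> Ow Ow'; rewrite /Dn.
have -> : (letter w n == letter w' n) = (odd (jumps w) == odd (jumps w')).
  by rewrite !odd_jumps_Omega // /letter; case: (w _); case: (w' _).
rewrite prodfV !prod_i_jump -!mulrA; congr (_ * _).
case: eqP => [<-|_]; last by rewrite !mulr0.
have i_neq0 : 'i ^+ odd (jumps w) != 0 :> algC by rewrite expf_neq0 ?neq0Ci.
rewrite !mulr1 invfM mulrCA !mulrA mulrAC (mulrAC ('i ^+ _)) mulfV // mul1r rmorphM /=.
by rewrite /jumps_sign !rmorphXn /= !rmorphN1 invr_sign.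
Qed.

End JumpsOmega.

Arguments jumps {n}.
Arguments jumps_sign {n}.

Theorem lemma2p6 (n : nat) (A : {set bstring n}) :
  (1 <= n)%N -> A \subset Omega n -> odd #|A| -> mu A != 0.
Proof.
move=> _ AOmega oddA.
pose b (w : bstring n) := odd (jumps w).
have muE : mu A = 2 ^- n * ((\sum_(w in A | b w) jumps_sign w) ^+ 2
                            + (\sum_(w in A | ~~ b w) jumps_sign w) ^+ 2)%:~R.
  rewrite -sum_sqr_classes /mu rmorph_sum mulr_sumr; apply: eq_bigr => w Aw.
  rewrite rmorph_sum mulr_sumr; apply: eq_bigr => w' Aw'.
  by rewrite Dn_Omega //; apply: (subsetP AOmega).
rewrite muE mulf_neq0 ?invr_eq0 ?expf_neq0 ?pnatr_eq0 // intr_eq0.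
rewrite paddr_eq0 ?sqr_ge0 // !sqrf_eq0 negb_and.
move: oddA; rewrite -(cardID b A) oddD.
have [oddI _|_ /= oddDiff] := boolP (odd #|[predI A & b]|); apply/orP.
  left; rewrite (eq_bigl (fun w => w \in [predI A & b])) //.
  exact: sum_signs_neq0.
right; rewrite (eq_bigl (fun w => w \in [predD A & b])) => [|w].
  exact: sum_signs_neq0.
by rewrite !inE andbC.
Qed.
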